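(* Let $k\ge0$, $K=k+6$, $M=K/\gcd(K,60)$. Let $(a_0;a_1,a_2)$ be integers with $a_0+a_1+a_2=k+3$ such that $C(a_0;a_1,a_2)=J^i(a_0;a_1,a_2)$ for some $i\in\{0,1,2\}$ (i.e. two of $a_0,a_1,a_2$ coincide). Then $D(a_1,a_2)\equiv 0\pmod M$; equivalently, for the corresponding $G_2^{(1)}$-weight $b'$ with $Cb'=J^ib'$, $\dim_{G_2}(b')\equiv0\pmod M$.
   Context: For integers $a_1,a_2$, $D(a_1,a_2)=\frac{1}{120}(a_2-a_1)(a_2+1)(2a_2+a_1+3)(a_2+a_1+2)(a_2+2a_1+3)(a_1+1)$ (the formal $G_2$ Weyl dimension, an integer). Integral level-$(k+2)$ $G_2^{(1)}$-weights $(c_0;c_1,c_2)$ (integers, $c_0+2c_1+c_2=k+2$) correspond to integer triples $(a_0;a_1,a_2)$ with $a_0+a_1+a_2=k+3$ via $(a_0;a_1,a_2)=(c_0;c_1,c_1+c_2+1)$, and $\dim_{G_2}(c)=D(a_1,a_2)$. On these triples, $C(a_0;a_1,a_2)=(a_0;a_2,a_1)$ and $J(a_0;a_1,a_2)=(a_2;a_0,a_1)$; on $G_2$ labels $C(c_0;c_1,c_2)=(c_0;c_1+c_2+1,-c_2-2)$ and $J(c_0;c_1,c_2)=(c_1+c_2+1;c_0,c_1-c_0-1)$. *)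

From mathcomp Require Import all_boot all_order all_algebra.
Set Implicit Arguments. Unset Strict Implicit. Unset Printing Implicit Defensive.
Import Order.TTheory GRing.Theory Num.Theory.
Local Open Scope ring_scope.

(* Formal G2 Weyl dimension
   D(a1,a2) = (a2-a1)(a2+1)(2a2+a1+3)(a2+a1+2)(a2+2a1+3)(a1+1)/120.
   The numerator is always divisible by 120, so the (Euclidean) integer
   division is exact. *)
Definition Dnum (a1 a2 : int) : int :=
  (a2 - a1) * (a2 + 1) * (2 * a2 + a1 + 3) * (a2 + a1 + 2)
    * (a2 + 2 * a1 + 3) * (a1 + 1).
Definition D (a1 a2 : int) : int := (Dnum a1 a2 %/ 120)%Z.

Definition Cmap (a : int * int * int) : int * int * int :=
  let: (a0, a1, a2) := a in (a0, a2, a1).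
Definition Jmap (a : int * int * int) : int * int * int :=
  let: (a0, a1, a2) := a in (a2, a0, a1).

From mathcomp Require Import all_boot all_order all_algebra.
From mathcomp Require Import ring zify.
Import Order.TTheory GRing.Theory Num.Theory.
Local Open Scope ring_scope.

(* When two of a0, a1, a2 equal x, the third is K - 3 - 2x with K = k + 6, and
   D has the linear factor a2 + 2 a1 + 3 = K at (a1, a2) = (x, K - 3 - 2x); the
   other case is reduced to this one by the antisymmetry of D.  Hence
   120 D = K P with P(x, K) even, while 120 | K P because D is integral (a
   finite check modulo 8, 3 and 5).  Writing K = M g with g = gcd(K, 60) gives
   120 | g P = gcd(K P, 60 P), so M divides K P / 120 = M (g P / 120). *)

Definition weyl_num {R : pzRingType} (a1 a2 : R) : R :=
  (a2 - a1) * (a2 + 1) * (a2 *+ 2 + a1 + 3) * (a2 + a1 + 2)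
    * (a2 + a1 *+ 2 + 3) * (a1 + 1).

Definition fixed_cofactor {R : pzRingType} (x K : R) : R :=
  (K - 3 - x *+ 3) * (K - 2 - x *+ 2) * (K *+ 2 - 3 - x *+ 3) * (K - 1 - x)
    * (x + 1).

Lemma Dnum_weyl_num a1 a2 : Dnum a1 a2 = weyl_num a1 a2.
Proof. by rewrite /Dnum /weyl_num; ring. Qed.

Lemma Dnum_antisym a1 a2 : Dnum a2 a1 = - Dnum a1 a2.
Proof. by rewrite /Dnum; ring. Qed.

Lemma Dnum_fixed x K : Dnum x (K - 3 - x *+ 2) = K * fixed_cofactor x K.
Proof. by rewrite /Dnum /fixed_cofactor; ring. Qed.

Lemma weyl_num_intr (R : pzRingType) (a1 a2 : int) :
  (weyl_num a1 a2)%:~R = weyl_num (a1%:~R : R) a2%:~R.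
Proof. by rewrite /weyl_num !(rmorphM, rmorphB, rmorphD, rmorphMn, rmorph_nat). Qed.

Lemma fixed_cofactor_intr (R : pzRingType) (x K : int) :
  (fixed_cofactor x K)%:~R = fixed_cofactor (x%:~R : R) K%:~R.
Proof. by rewrite /fixed_cofactor !(rmorphM, rmorphB, rmorphD, rmorphMn, rmorph_nat). Qed.

Section DivisibilityByEvaluation.

Variable d : nat.
Hypothesis d_gt1 : (1 < d)%N.

Lemma intr_Zp_eq0 (z : int) : ((z%:~R : 'Z_d) == 0) = (d%:Z %| z)%Z.
Proof.
case: z => n; rewrite ?NegzE ?mulrNz ?oppr_eq0 ?rpredN -pmulrn.
all: by rewrite -val_eqE /= val_Zp_nat.
Qed.

(* [all] over [iota 0 d] computes, unlike [forall] over the finType ['Z_d]. *)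
Lemma dvdz_by_evaluation (f : int -> int -> int) (F : 'Z_d -> 'Z_d -> 'Z_d) :
  (forall a b, (f a b)%:~R = F a%:~R b%:~R) ->
  all (fun a => all (fun b => F a%:R b%:R == 0) (iota 0 d)) (iota 0 d) ->
  forall a b, (d%:Z %| f a b)%Z.
Proof.
move=> f_intr /allP F0 a b; rewrite -intr_Zp_eq0 f_intr.
have in_iota (u : 'Z_d) : val u \in iota 0 d.
  by rewrite mem_iota /= -{2}(Zp_cast d_gt1) ltn_ord.
by move/allP: (F0 _ (in_iota a%:~R)) => /(_ _ (in_iota b%:~R)); rewrite !natr_Zp.
Qed.

End DivisibilityByEvaluation.

Lemma dvdz_Dnum a1 a2 : (120 %| Dnum a1 a2)%Z.
Proof.
have check d : (1 < d)%N ->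
    all (fun a => all (fun b => weyl_num (a%:R : 'Z_d) b%:R == 0) (iota 0 d))
      (iota 0 d) ->
    (d%:Z %| Dnum a1 a2)%Z.
  by move=> d_gt1 ok; rewrite Dnum_weyl_num;
    exact: (@dvdz_by_evaluation d d_gt1 _ _ (@weyl_num_intr _) ok).
rewrite (_ : 120 = 8 * (3 * 5)) // !Gauss_dvdz //.
by rewrite !check //; vm_compute.
Qed.

Lemma dvdz_fixed_cofactor x K : (2 %| fixed_cofactor x K)%Z.
Proof. by apply: (@dvdz_by_evaluation 2 isT _ _ (@fixed_cofactor_intr _)); vm_compute. Qed.

Lemma dvdn_divn_gcd_mul (K m n p : nat) :
  (n %| K * p)%N -> (n %| m * p)%N -> (K %/ gcdn K m * n %| K * p)%N.
Proof.
move=> nKp nmp; set g := gcdn K m.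
have -> : (K * p = K %/ g * (g * p))%N by rewrite mulnA divnK // dvdn_gcdl.
by rewrite dvdn_mul // /g muln_gcdl dvdn_gcd nKp.
Qed.

Lemma dvdz_divz (d m n : int) : d != 0 -> (m * d %| n)%Z -> (m %| n %/ d)%Z.
Proof.
move=> d_neq0 mdn; have dn : (d %| n)%Z by apply: dvdz_trans mdn; apply: dvdz_mull.
by rewrite -(@dvdz_mul2r d) // divzK.
Qed.

Lemma dvdz_Dnum_fixed (K : nat) (x : int) :
  ((K %/ gcdn K 60)%N%:Z * 120 %| Dnum x (K%:Z - 3 - x *+ 2))%Z.
Proof.
have := dvdz_Dnum x (K%:Z - 3 - x *+ 2); have := dvdz_fixed_cofactor x K.
rewrite Dnum_fixed; move: (fixed_cofactor x K) => P.
rewrite !dvdzE !abszM absz_nat => P_even h120.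
by rewrite dvdn_divn_gcd_mul // (_ : `|120%R| = 60 * 2)%N // dvdn_pmul2l.
Qed.

Theorem theorem3 (k : nat) (a0 a1 a2 : int)
  (hsum : a0 + a1 + a2 = (k + 3)%N%:Z)
  (hfix : exists2 i : nat, (i < 3)%N & Cmap (a0, a1, a2) = iter i Jmap (a0, a1, a2)) :
  let K := (k + 6)%N in
  let M := (K %/ gcdn K 60)%N in
  (M%:Z %| D a1 a2)%Z.
Proof.
change (((k + 6) %/ gcdn (k + 6) 60)%N%:Z %| D a1 a2)%Z; set K := (k + 6)%N.
apply: dvdz_divz => //.
case: hfix => -[|[|[|i]]] // _ [].
- by move=> ->; rewrite /Dnum subrr !mul0r dvdz0.
- move=> a02 _; have -> : a1 = K%:Z - 3 - a2 *+ 2 by rewrite /K; lia.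
  by rewrite Dnum_antisym rpredN dvdz_Dnum_fixed.
- move=> a01 _; have -> : a2 = K%:Z - 3 - a1 *+ 2 by rewrite /K; lia.
  exact: dvdz_Dnum_fixed.
Qed.
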